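(* Let $J$ be an instance of broadcast scheduling with maximum flow time, let $L^*$ be its optimal maximum flow time, and let $0<\epsilon\le1$ be such that $\epsilon L^*$ is a positive integer. Let $J'$ be the modified instance defined below. Then there exists a schedule $\sigma'$ for $J'$ with maximum flow time at most $(1+2\epsilon)L^*$. Further, any schedule $\sigma'$ for $J'$ can be converted into a feasible schedule $\sigma$ for the original instance $J$ such that $F^\sigma_\rho-F^{\sigma'}_\rho\le 2\epsilon L^*$ for every request $\rho$.
   Context: Broadcast scheduling with maximum flow time: pages $\mathcal{P}$ (unit-sized), requests $\rho$ with integer release time $r_\rho\ge0$ and requested page $p_\rho$. In the original instance $J$ a feasible schedule transmits at most one page at each positive integer time. In a schedule $\sigma$, the completion time $C^\sigma_\rho$ is the first time strictly greater than $r_\rho$ at which $p_\rho$ is transmitted, and the flow time is $F^\sigma_\rho=C^\sigma_\rho-r_\rho$. The modified instance $J'$: each request $\rho$ of $J$ is kept with the same page but its release time is shifted to $\epsilon L^*\lceil r_\rho/(\epsilon L^* )\rceil$; in $J'$ a schedule may transmit pages only at times that are integral multiples of $\epsilon L^*$, and at most $\epsilon L^*$ pages at each such time. Completion and flow times in $J'$ are defined as in $J$ (with respect to the shifted release times); the flow time of $\rho$ in $J$ under $\sigma$ uses the original release time. *)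

From HB Require Import structures.
From mathcomp Require Import all_boot all_order all_algebra.
Set Implicit Arguments. Unset Strict Implicit. Unset Printing Implicit Defensive.

(* An instance J: a finite type of pages P, a finite type of requests I,
   with requested page [pg i] and integer release time [rel i >= 0]. *)

(* A schedule for J: at each time t the page transmitted (if any).
   Transmissions are only allowed at positive integer times. *)
Definition schedJ (P : finType) := nat -> option P.
Definition feasibleJ (P : finType) (s : schedJ P) : Prop := s 0 = None.

Definition completesJ (P : finType) (s : schedJ P) (p : P) (r C : nat) : Prop :=
  [/\ r < C, s C = Some p & forall t, r < t -> t < C -> s t <> Some p].

Definition maxflowJ_le (P I : finType) (pg : I -> P) (rel : I -> nat)
  (s : schedJ P) (L : nat) : Prop :=
  forall i : I, exists C, completesJ s (pg i) (rel i) C /\ C - rel i <= L.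

Definition opt_maxflow (P I : finType) (pg : I -> P) (rel : I -> nat) (L : nat) : Prop :=
  (exists s, feasibleJ s /\ maxflowJ_le pg rel s L) /\
  (forall s L', feasibleJ s -> maxflowJ_le pg rel s L' -> L <= L').

(* The modified instance J' (with k = eps * Lopt): release times shifted to
   k * ceil(r / k); transmissions only at integral multiples of k, at most
   k pages at each such time. *)
Definition shift_rel (k r : nat) : nat := k * (divn (r + (k - 1)) k).

Definition schedJ' (P : finType) := nat -> {set P}.
Definition feasibleJ' (P : finType) (k : nat) (s : schedJ' P) : Prop :=
  forall t, #|s t| <= k /\ (s t != set0 -> k %| t).

Definition completesJ' (P : finType) (s : schedJ' P) (p : P) (r C : nat) : Prop :=
  [/\ r < C, p \in s C & forall t, r < t -> t < C -> p \notin s t].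

From HB Require Import structures.
From mathcomp Require Import all_boot all_order all_algebra.
From mathcomp Require Import zify lra.
Import Order.TTheory GRing.Theory Num.Theory.

Set Implicit Arguments.
Unset Strict Implicit.
Unset Printing Implicit Defensive.

(* Write k = eps L*.  Batching an optimal schedule of J, the pages sent in
   (t - 2k, t - k] are all sent at the multiple t of k: a request completed
   at C is served by the batch at most 2k - 1 steps later, and since its
   shifted release is still below that batch it gains at most 2k in flow
   time.  Conversely a batch of at most k pages sent at a multiple t of k
   is unrolled over the slots t + 1, ..., t + k; a request is delayed by at
   most k, and its release moves back by less than k. *)

Lemma exists_first_after (q : pred nat) (r t : nat) : (r < t)%N -> q t ->
  exists C, [/\ (r < C)%N, q C, (C <= t)%N &
    forall u, (r < u)%N -> (u < C)%N -> ~~ q u].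
Proof.
move=> rt qt.
have ex_q : exists n, (r < n)%N && q n by exists t; rewrite rt qt.
case: (ex_minnP ex_q) => C /andP[rC qC] minC.
exists C; split => //; first by apply: minC; rewrite rt qt.
move=> u ru uC; apply/negP => qu.
by have := minC u; rewrite ru qu => /(_ isT); rewrite leqNgt uC.
Qed.

Lemma card_Some_codom (P : finType) (n : nat) (f : 'I_n -> option P) :
  (#|[set p | Some p \in codom f]| <= n)%N.
Proof.
have inj_Some : injective (@Some P) by move=> x y [].
rewrite -(card_image inj_Some) -[n in (_ <= n)%N]card_ord.
apply: leq_trans (leq_image_card f 'I_n).
by apply/subset_leq_card/subsetP => o /imageP[p]; rewrite inE => fp ->.
Qed.

Section Batching.

Variables (P : finType) (k : nat).
Hypothesis k_gt0 : (0 < k)%N.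

Lemma leq_shift_rel (r : nat) : (r <= shift_rel k r)%N.
Proof. rewrite /shift_rel; lia. Qed.

Lemma shift_rel_lt (r : nat) : (shift_rel k r < r + k)%N.
Proof. rewrite /shift_rel; lia. Qed.

Lemma shift_rel_min (r m : nat) : (k %| m)%N -> (r <= m)%N -> (shift_rel k r <= m)%N.
Proof.
move=> /dvdnP[q ->] rq.
by rewrite /shift_rel mulnC leq_mul2r -ltnS ltn_divLR // mulSn; lia.
Qed.

Definition batch (s : schedJ P) : schedJ' P := fun t =>
  if (k %| t)%N then [set p | Some p \in codom (fun u : 'I_k => s (t - k - u)%N)]
  else set0.

Lemma feasible_batch (s : schedJ P) : feasibleJ' k (batch s).
Proof.
move=> t; rewrite /batch; case: ifP => [kt|_]; last by rewrite cards0 eqxx.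
by split=> //; apply: card_Some_codom.
Qed.

Lemma batch_completes (s : schedJ P) (p : P) (r C : nat) :
  (r < C)%N -> s C = Some p ->
  exists C', completesJ' (batch s) p (shift_rel k r) C' /\
    (C' - shift_rel k r <= C - r + 2 * k)%N.
Proof.
move=> rC sC; set t := ((C - 1) %/ k + 2) * k.
have C_batched : p \in batch s t.
  have ltu : (t - k - C < k)%N by rewrite /t; lia.
  rewrite /batch dvdn_mull // inE; apply/codomP; exists (Ordinal ltu) => /=.
  by have -> : (t - k - (t - k - C) = C)%N by rewrite /t; lia.
have shift_le : (shift_rel k r <= t - k)%N.
  by apply: shift_rel_min; [rewrite dvdn_sub ?dvdn_mull | rewrite /t; lia].
have shift_lt : (shift_rel k r < t)%N by rewrite /t in shift_le *; lia.
have [C' [rC' pC' C't first]] :=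
  exists_first_after (q := fun u => p \in batch s u) shift_lt C_batched.
exists C'; split; first by split => // u ru uC'; apply: first.
by move: C't (leq_shift_rel r); rewrite /t; lia.
Qed.

Definition unbatch (s' : schedJ' P) : schedJ P := fun t =>
  if t is u.+1 then nth None (map Some (enum (s' (u %/ k * k)%N))) (u %% k)
  else None.

Lemma feasible_unbatch (s' : schedJ' P) : feasibleJ (unbatch s').
Proof. by []. Qed.

Lemma unbatch_sends (s' : schedJ' P) (p : P) (t : nat) :
  feasibleJ' k s' -> p \in s' t ->
  exists2 j, (j < k)%N & unbatch s' (t + j).+1 = Some p.
Proof.
move=> fs' pt; have [card_t dvd_t] := fs' t.
have kt : (k %| t)%N by apply: dvd_t; apply/set0Pn; exists p.
set j := index p (enum (s' t)).
have j_size : (j < size (enum (s' t)))%N by rewrite index_mem mem_enum.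
have jk : (j < k)%N by apply: leq_trans card_t; rewrite cardE.
exists j => //=; rewrite -{1 2}(divnK kt).
rewrite divnMDl // modnMDl (divn_small jk) (modn_small jk) addn0 divnK //.
by rewrite (nth_map p) // nth_index // mem_enum.
Qed.

Lemma unbatch_completes (s' : schedJ' P) (p : P) (r C' : nat) :
  feasibleJ' k s' -> completesJ' s' p (shift_rel k r) C' ->
  exists C, completesJ (unbatch s') p r C /\
    (C - r <= C' - shift_rel k r + 2 * k)%N.
Proof.
move=> fs' [rC' pC' _].
have [j jk sent] := unbatch_sends fs' pC'.
have r_lt : (r < (C' + j).+1)%N by move: (leq_shift_rel r) rC'; lia.
have [C [rC /eqP pC Ct first]] :=
  exists_first_after (q := fun u => unbatch s' u == Some p) r_lt (introT eqP sent).
exists C; split; first by split => // u ru uC; apply/eqP; apply: first.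
by move: Ct (shift_rel_lt r) rC'; lia.
Qed.

End Batching.

Local Open Scope ring_scope.

Theorem lemma2p2 (R : realFieldType) (P I : finType) (pg : I -> P) (rel : I -> nat)
  (L : nat) (eps : R) (k : nat) :
  opt_maxflow pg rel L ->
  0 < eps -> eps <= 1 ->
  eps * L%:R = k%:R -> (0 < k)%N ->
  (exists s' : schedJ' P, feasibleJ' k s' /\
     forall i : I, exists C',
       completesJ' s' (pg i) (shift_rel k (rel i)) C' /\
       (C' - shift_rel k (rel i))%:R <= (1 + 2 * eps) * L%:R) /\
  (forall s' : schedJ' P, feasibleJ' k s' ->
     exists s : schedJ P, feasibleJ s /\
       forall (i : I) (C' : nat),
         completesJ' s' (pg i) (shift_rel k (rel i)) C' ->
         exists C, completesJ s (pg i) (rel i) C /\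
           (C - rel i)%:R - (C' - shift_rel k (rel i))%:R <= 2 * eps * L%:R).
Proof.
move=> [[s [_ s_opt]] _] _ _ kE k_gt0.
have twokE : (2 * k)%N%:R = 2 * eps * L%:R :> R by rewrite natrM -mulrA kE.
split.
- exists (batch k s); split; first exact: feasible_batch.
  move=> i; have [C [[rC sC _] flowC]] := s_opt i.
  have [C' [done' flow']] := batch_completes k_gt0 rC sC.
  exists C'; split => //.
  have : (C' - shift_rel k (rel i) <= L + 2 * k)%N by lia.
  by rewrite -(ler_nat R) natrD twokE => ?; lra.
- move=> s' fs'; exists (unbatch k s'); split; first exact: feasible_unbatch.
  move=> i C' done'.
  have [C [doneC flowC]] := unbatch_completes k_gt0 fs' done'.
  exists C; split => //.
  by move: flowC; rewrite -(ler_nat R) natrD twokE => ?; lra.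
Qed.
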